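(* For every integer $a\geq 1$, $$\sum_{n\geq 1}\frac{H_{2n-1}}{(2n-1)^{2a}}=\frac{2a+1}{2}\lambda(2a+1)-\sum_{j=1}^{a-1}\zeta(2a+1-2j)\lambda(2j),$$ where an empty sum equals $0$.
   Context: $H_n=1+\frac12+\cdots+\frac1n$. For real $s>1$, $\lambda(s)=\sum_{n\geq 1}\frac{1}{(2n-1)^s}=(1-2^{-s})\zeta(s)$, and $\zeta$ is the Riemann zeta function. *)

From Stdlib Require Import Reals List.
From Coquelicot Require Import Coquelicot.
Open Scope R_scope.

Definition harmonic (n : nat) : R :=
  fold_right Rplus 0 (map (fun k => / INR k) (seq 1 n)).

Definition zeta (s : nat) : R := Series (fun n => / (INR (S n)) ^ s).

Definition lambda (s : nat) : R := Series (fun n => / (INR (2 * n + 1)) ^ s).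

Definition sum_1_to (m : nat) (f : nat -> R) : R :=
  fold_right Rplus 0 (map f (seq 1 m)).

(* Write [a = m + 1], [x = 2i + 1], [y = k + 1] and
   [G_m(x, y) = sum_(t<m) x^-(2t+2) y^-(2m+1-2t)].  Summing [G_m(x, y)] over [y] and then
   over odd [x] gives [sum_(t<m) zeta(2m+1-2t) lambda(2t+2)].  On the other hand, for [x <> y]
   the geometric sum is [G_m(x, y) = y^-(2m+1) / (x^2 - y^2) - x^-2m / (y (x^2 - y^2))], and
   [G_m(x, x) = m x^-(2m+3)].  Partial fractions and telescoping give
   [sum_(y <> x) 1 / (y (x^2 - y^2)) = (H_x - 5 / (4x)) / x^2], which isolates [H_x / x^(2m+2)]
   in the row sum over [y]; and [sum_(x odd, x <> y) 1 / (x^2 - y^2)] is [1 / (4 y^2)] for odd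
   [y] and [0] for even [y], so after exchanging the order of summation (the double series is
   absolutely convergent) the first part contributes [lambda(2m+3) / 4].  Altogether
   [sum H_x / x^(2m+2) = (1/4 + m + 5/4) lambda(2m+3) - sum_t zeta(2m+1-2t) lambda(2t+2)]. *)

From Stdlib Require Import Reals List Lra Lia.
From Coquelicot Require Import Coquelicot.
Open Scope R_scope.

Fixpoint sumN (f : nat -> R) (n : nat) : R :=
  match n with O => 0 | S m => sumN f m + f m end.

Lemma sumN_recr f n : sumN f (S n) = sumN f n + f n.
Proof. reflexivity. Qed.

Lemma sumN_ext f g n : (forall k, (k < n)%nat -> f k = g k) -> sumN f n = sumN g n.
Proof.
  induction n as [|n IH]; intros H; simpl; [reflexivity|].
  rewrite IH by (intros; apply H; lia). rewrite H by lia. reflexivity.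
Qed.

Lemma sumN_recl f n : sumN f (S n) = f O + sumN (fun k => f (S k)) n.
Proof. induction n as [|n IH]; [simpl; ring|]. rewrite sumN_recr, IH. simpl. ring. Qed.

Lemma sumN_split f n m : sumN f (n + m) = sumN f n + sumN (fun k => f (n + k)%nat) m.
Proof.
  induction m as [|m IH]; simpl; [rewrite Nat.add_0_r; ring|].
  rewrite Nat.add_succ_r. simpl. rewrite IH. ring.
Qed.

Lemma sumN_plus f g n : sumN (fun k => f k + g k) n = sumN f n + sumN g n.
Proof. induction n as [|n IH]; simpl; [|rewrite IH]; ring. Qed.

Lemma sumN_scal c f n : sumN (fun k => c * f k) n = c * sumN f n.
Proof. induction n as [|n IH]; simpl; [|rewrite IH]; ring. Qed.

Lemma sumN_opp f n : sumN (fun k => - f k) n = - sumN f n.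
Proof. induction n as [|n IH]; simpl; [|rewrite IH]; ring. Qed.

Lemma sumN_zero n : sumN (fun _ => 0) n = 0.
Proof. induction n as [|n IH]; simpl; [|rewrite IH]; ring. Qed.

Lemma sumN_le f g n : (forall k, (k < n)%nat -> f k <= g k) -> sumN f n <= sumN g n.
Proof.
  induction n as [|n IH]; intros H; simpl; [lra|].
  apply Rplus_le_compat; [apply IH; intros; apply H|apply H]; lia.
Qed.

Lemma sumN_nonneg f n : (forall k, (k < n)%nat -> 0 <= f k) -> 0 <= sumN f n.
Proof. intros H. rewrite <- (sumN_zero n). apply sumN_le, H. Qed.

Lemma sumN_rev f n : sumN f n = sumN (fun k => f (n - S k)%nat) n.
Proof.
  induction n as [|n IH]; [reflexivity|].
  rewrite sumN_recr, sumN_recl, IH, Nat.sub_1_r, Rplus_comm. reflexivity.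
Qed.

Lemma sumN_antisym f n : (forall k, (k < n)%nat -> f (n - S k)%nat = - f k) -> sumN f n = 0.
Proof.
  intros H.
  assert (sumN f n = - sumN f n).
  { rewrite sumN_rev at 1. rewrite <- sumN_opp. apply sumN_ext. intros. apply H. lia. }
  lra.
Qed.

Lemma fold_right_sumN f s n :
  fold_right Rplus 0 (map f (seq s n)) = sumN (fun k => f (s + k)%nat) n.
Proof.
  revert s; induction n as [|n IH]; intros s; [reflexivity|].
  cbn [seq map fold_right]. rewrite IH, sumN_recl, Nat.add_0_r.
  f_equal. apply sumN_ext. intros. f_equal. lia.
Qed.

Lemma is_series_sumN (a : nat -> R) (l : R) : is_series a l <-> is_lim_seq (sumN a) l.
Proof.
  assert (E : forall n, sum_f_R0 a n = sumN a (S n)).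
  { induction n as [|n IH]; simpl; [ring|]. rewrite IH. reflexivity. }
  rewrite is_series_Reals, is_lim_seq_incr_1, is_lim_seq_Reals.
  unfold infinite_sum, Un_cv. setoid_rewrite E. reflexivity.
Qed.

Lemma is_series_Rplus (a b : nat -> R) (la lb : R) :
  is_series a la -> is_series b lb -> is_series (fun n => a n + b n) (la + lb).
Proof. exact (is_series_plus a b la lb). Qed.

Lemma is_series_Rminus (a b : nat -> R) (la lb : R) :
  is_series a la -> is_series b lb -> is_series (fun n => a n - b n) (la - lb).
Proof. exact (is_series_minus a b la lb). Qed.

Lemma is_series_Ropp (a : nat -> R) (la : R) :
  is_series a la -> is_series (fun n => - a n) (- la).
Proof. exact (is_series_opp a la). Qed.

Lemma is_series_Rscal (c : R) (a : nat -> R) (la : R) :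
  is_series a la -> is_series (fun n => c * a n) (c * la).
Proof. exact (is_series_scal_l c a la). Qed.

Lemma ex_series_Rplus (a b : nat -> R) :
  ex_series a -> ex_series b -> ex_series (fun n => a n + b n).
Proof. exact (ex_series_plus a b). Qed.

Lemma ex_series_Rscal (c : R) (a : nat -> R) : ex_series a -> ex_series (fun n => c * a n).
Proof. exact (ex_series_scal_l c a). Qed.

Lemma ex_series_Rle (a b : nat -> R) :
  (forall n, Rabs (a n) <= b n) -> ex_series b -> ex_series a.
Proof. exact (ex_series_le a b). Qed.

Lemma is_series_eq_lim (a : nat -> R) (l l' : R) : l = l' -> is_series a l -> is_series a l'.
Proof. intros ->. trivial. Qed.

Lemma is_series_sum_family (f : nat -> nat -> R) (l : nat -> R) N :
  (forall j, (j < N)%nat -> is_series (f j) (l j)) ->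
  is_series (fun k => sumN (fun j => f j k) N) (sumN l N).
Proof.
  induction N as [|N IH]; intros H; simpl.
  - apply is_series_sumN.
    apply is_lim_seq_ext with (fun _ => 0); [intros; symmetry; apply sumN_zero|].
    apply is_lim_seq_const.
  - apply is_series_Rplus; [apply IH; intros|]; apply H; lia.
Qed.

Lemma Series_sum_family (f : nat -> nat -> R) N :
  (forall j, (j < N)%nat -> ex_series (f j)) ->
  Series (fun k => sumN (fun j => f j k) N) = sumN (fun j => Series (f j)) N.
Proof.
  intros H. apply is_series_unique, is_series_sum_family.
  intros. apply Series_correct, H. assumption.
Qed.

Lemma is_series_finite_support (u : nat -> R) N :
  is_series (fun k => if (k <? N)%nat then u k else 0) (sumN u N).
Proof.
  apply is_series_sumN, is_lim_seq_incr_n with (N := N).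
  apply is_lim_seq_ext with (fun _ => sumN u N); [|apply is_lim_seq_const].
  intros n. rewrite Nat.add_comm, sumN_split.
  rewrite (sumN_ext (fun k => if (k <? N)%nat then u k else 0) u).
  2: { intros k Hk. apply Nat.ltb_lt in Hk. rewrite Hk. reflexivity. }
  rewrite (sumN_ext (fun k => if (N + k <? N)%nat then u (N + k)%nat else 0) (fun _ => 0)).
  2: { intros k _. destruct (Nat.ltb_spec (N + k) N); [lia|reflexivity]. }
  rewrite sumN_zero. ring.
Qed.

Lemma is_series_spike (v : R) m : is_series (fun k => if (k =? m)%nat then v else 0) v.
Proof.
  apply is_series_ext with
    (fun k => if (k <? S m)%nat then (if (k =? m)%nat then v else 0) else 0).
  { intros k. destruct (Nat.ltb_spec k (S m)); [reflexivity|].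
    destruct (Nat.eqb_spec k m); [lia|reflexivity]. }
  eapply is_series_eq_lim; [|apply is_series_finite_support].
  rewrite sumN_recr, Nat.eqb_refl, (sumN_ext (fun k => if (k =? m)%nat then v else 0) (fun _ => 0)).
  - rewrite sumN_zero. ring.
  - intros k Hk. destruct (Nat.eqb_spec k m); [lia|reflexivity].
Qed.

Lemma is_lim_seq_sumN_tail (c : nat -> R) L :
  is_lim_seq c 0 -> is_lim_seq (fun N => sumN (fun k => c (N + k)%nat) L) 0.
Proof.
  intros Hc. induction L as [|L IH]; simpl; [apply is_lim_seq_const|].
  replace (Finite 0) with (Finite (0 + 0)) by (f_equal; ring).
  apply is_lim_seq_plus'. { exact IH. }
  apply (is_lim_seq_incr_n c L), Hc.
Qed.

(* The [N]-th partial sum is [sumN c L] minus the [L] terms [c (N + k)], which tend to 0. *)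
Lemma is_series_telescope (c : nat -> R) L :
  is_lim_seq c 0 -> is_series (fun k => c k - c (k + L)%nat) (sumN c L).
Proof.
  intros Hc. apply is_series_sumN.
  assert (E : forall N, sumN (fun k => c k - c (k + L)%nat) N
                        = sumN c L - sumN (fun k => c (N + k)%nat) L).
  { induction N as [|N IH]; simpl; [change (fun k => c k) with c; ring|]. rewrite IH.
    assert (H := sumN_recr (fun k => c (N + k)%nat) L).
    rewrite sumN_recl, Nat.add_0_r in H.
    rewrite (sumN_ext (fun k => c (S (N + k))) (fun k => c (N + S k)%nat))
      by (intros; f_equal; lia).
    lra. }
  apply is_lim_seq_ext with (fun N => sumN c L - sumN (fun k => c (N + k)%nat) L);
    [intros; symmetry; apply E|].
  replace (Finite (sumN c L)) with (Rbar_minus (sumN c L) 0) by (simpl; f_equal; ring).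
  apply is_lim_seq_minus'; [apply is_lim_seq_const|apply is_lim_seq_sumN_tail, Hc].
Qed.

Lemma is_lim_seq_inv_S : is_lim_seq (fun n => / INR (S n)) 0.
Proof.
  replace (Finite 0) with (Rbar_inv p_infty) by reflexivity.
  apply is_lim_seq_inv; [|discriminate].
  apply is_lim_seq_incr_1 with (u := INR), is_lim_seq_INR.
Qed.

Lemma is_lim_seq_le_inv_S (w : nat -> R) :
  (forall n, 0 <= w n <= / INR (S n)) -> is_lim_seq w 0.
Proof.
  intros H. apply is_lim_seq_le_le with (fun _ => 0) (fun n => / INR (S n)); [exact H| |].
  - apply is_lim_seq_const.
  - apply is_lim_seq_inv_S.
Qed.

Lemma is_series_even (u : nat -> R) (l : R) :
  (forall i, u (2 * i + 1)%nat = 0) -> is_series (fun i => u (2 * i)%nat) l -> is_series u l.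
Proof.
  intros Hodd Hs.
  assert (E : forall N, sumN u (2 * N) = sumN (fun i => u (2 * i)%nat) N
                        /\ sumN u (2 * N + 1) = sumN (fun i => u (2 * i)%nat) (S N)).
  { induction N as [|N [_ IH]]; [split; simpl; ring|].
    assert (Ev : sumN u (2 * S N) = sumN (fun i => u (2 * i)%nat) (S N)).
    { replace (2 * S N)%nat with (S (2 * N + 1)) by lia.
      rewrite sumN_recr, IH, Hodd. ring. }
    split; [exact Ev|].
    replace (2 * S N + 1)%nat with (S (2 * S N)) by lia.
    rewrite sumN_recr, Ev. reflexivity. }
  rewrite is_series_sumN, is_lim_seq_Reals in *.
  intros eps Heps. destruct (Hs eps Heps) as [K HK]. exists (2 * K + 1)%nat.
  intros n Hn. destruct (Nat.Even_or_Odd n) as [[N ->]|[N ->]].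
  - rewrite (proj1 (E N)). apply HK. lia.
  - rewrite (proj2 (E N)). apply HK. lia.
Qed.

Section NonnegativeSeries.

Variable a : nat -> R.
Hypothesis a_ge0 : forall n, 0 <= a n.

Lemma sumN_le_Series : ex_series a -> forall n, sumN a n <= Series a.
Proof.
  intros Ha n.
  assert (Hlim := Series_correct _ Ha). rewrite is_series_sumN in Hlim.
  apply (is_lim_seq_incr_n _ n) in Hlim.
  change (Rbar_le (sumN a n) (Series a)).
  apply (is_lim_seq_le (fun _ => sumN a n) (fun m => sumN a (m + n)));
    [|apply is_lim_seq_const|exact Hlim].
  intros m. rewrite Nat.add_comm, sumN_split.
  assert (0 <= sumN (fun k => a (n + k)%nat) m) by (apply sumN_nonneg; auto).
  lra.
Qed.

Lemma term_le_Series : ex_series a -> forall n, a n <= Series a.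
Proof.
  intros Ha n. apply Rle_trans with (sumN a (S n)); [|apply sumN_le_Series, Ha].
  rewrite sumN_recr. assert (0 <= sumN a n) by (apply sumN_nonneg; auto). lra.
Qed.

Lemma Series_ge0 : ex_series a -> 0 <= Series a.
Proof. intros Ha. apply Rle_trans with (a O); [apply a_ge0|apply term_le_Series, Ha]. Qed.

Lemma ex_series_bounded M : (forall n, sumN a n <= M) -> ex_series a /\ Series a <= M.
Proof.
  intros HM.
  assert (Hinc : forall n, sumN a n <= sumN a (S n))
    by (intros n; rewrite sumN_recr; specialize (a_ge0 n); lra).
  destruct (ex_finite_lim_seq_incr _ M Hinc HM) as [l Hl].
  assert (Hs : is_series a l) by (apply is_series_sumN, Hl).
  split; [exists l; exact Hs|].
  rewrite (is_series_unique _ _ Hs).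
  exact (is_lim_seq_le _ _ _ _ HM Hl (is_lim_seq_const M)).
Qed.

End NonnegativeSeries.

Lemma is_series_le_bound (a : nat -> R) (l M : R) :
  is_series a l -> (forall n, sumN a n <= M) -> l <= M.
Proof.
  rewrite is_series_sumN. intros H HM.
  exact (is_lim_seq_le _ _ _ _ HM H (is_lim_seq_const M)).
Qed.

Lemma tonelli (f : nat -> nat -> R) :
  (forall x y, 0 <= f x y) -> (forall x, ex_series (f x)) ->
  ex_series (fun x => Series (f x)) ->
  (forall y, ex_series (fun x => f x y)) /\
  is_series (fun y => Series (fun x => f x y)) (Series (fun x => Series (f x))).
Proof.
  intros Hf Hrow Htot.
  assert (Hcol : forall y, ex_series (fun x => f x y)).
  { intros y. apply ex_series_Rle with (fun x => Series (f x)); [|exact Htot].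
    intros x. rewrite Rabs_pos_eq by apply Hf. apply term_le_Series; auto. }
  split; [exact Hcol|].
  set (G := fun y => Series (fun x => f x y)).
  assert (HG : forall N, sumN G N <= Series (fun x => Series (f x))).
  { intros N. unfold G. rewrite <- (Series_sum_family (fun y x => f x y)) by auto.
    apply Series_le; [|exact Htot]. intros x. split.
    - apply sumN_nonneg. auto.
    - apply sumN_le_Series; auto. }
  destruct (ex_series_bounded G (fun y => Series_ge0 _ (fun x => Hf x y) (Hcol y)) _ HG)
    as [HGex HGle].
  assert (HGge : Series (fun x => Series (f x)) <= Series G).
  { apply (is_series_le_bound (fun x => Series (f x))); [apply Series_correct, Htot|].
    intros N. rewrite <- (Series_sum_family f) by auto.
    apply Series_le; [|exact HGex]. intros y. split.
    - apply sumN_nonneg. auto.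
    - apply (sumN_le_Series (fun x => f x y)); auto. }
  replace (Series (fun x => Series (f x))) with (Series G) by lra.
  apply Series_correct, HGex.
Qed.

(* Split [f] into its positive and negative parts and apply Tonelli to each. *)
Lemma fubini (f : nat -> nat -> R) :
  (forall x, ex_series (fun y => Rabs (f x y))) ->
  ex_series (fun x => Series (fun y => Rabs (f x y))) ->
  is_series (fun y => Series (fun x => f x y)) (Series (fun x => Series (f x))).
Proof.
  intros Hrow Htot.
  set (P := fun x y => (Rabs (f x y) + f x y) / 2).
  set (Q := fun x y => (Rabs (f x y) - f x y) / 2).
  assert (Hpart : forall g : nat -> nat -> R,
            (forall x y, 0 <= g x y <= Rabs (f x y)) ->
            (forall y, ex_series (fun x => g x y)) /\
            (forall x, ex_series (g x)) /\
            ex_series (fun x => Series (g x)) /\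
            is_series (fun y => Series (fun x => g x y)) (Series (fun x => Series (g x)))).
  { intros g Hg.
    assert (Hgrow : forall x, ex_series (g x)).
    { intros x. apply ex_series_Rle with (fun y => Rabs (f x y)); [|apply Hrow].
      intros y. rewrite Rabs_pos_eq; apply Hg. }
    assert (Hgtot : ex_series (fun x => Series (g x))).
    { apply ex_series_Rle with (fun x => Series (fun y => Rabs (f x y))); [|exact Htot].
      intros x. rewrite Rabs_pos_eq by (apply Series_ge0; [apply Hg|apply Hgrow]).
      apply Series_le; [apply Hg|apply Hrow]. }
    destruct (tonelli g (fun x y => proj1 (Hg x y)) Hgrow Hgtot) as [Hgcol Hgs].
    auto. }
  assert (HP : forall x y, 0 <= P x y <= Rabs (f x y)) by (intros; unfold P; split_Rabs; lra).
  assert (HQ : forall x y, 0 <= Q x y <= Rabs (f x y)) by (intros; unfold Q; split_Rabs; lra).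
  destruct (Hpart P HP) as [HPcol [HProw [HPtot HPs]]].
  destruct (Hpart Q HQ) as [HQcol [HQrow [HQtot HQs]]].
  assert (Ef : forall x y, f x y = P x y - Q x y) by (intros; unfold P, Q; field).
  assert (Erow : forall x, Series (f x) = Series (P x) - Series (Q x)).
  { intros x. rewrite <- Series_minus by auto. apply Series_ext. auto. }
  rewrite (Series_ext _ _ Erow), Series_minus by auto.
  apply is_series_ext with (fun y => Series (fun x => P x y) - Series (fun x => Q x y)).
  - intros y. rewrite <- Series_minus by auto. apply Series_ext. auto.
  - apply is_series_Rminus; assumption.
Qed.

Lemma INR_S_pos k : 0 < INR (S k).
Proof. apply lt_0_INR. lia. Qed.

Lemma INR_odd i : INR (2 * i + 1) = 2 * INR i + 1.
Proof. rewrite plus_INR, mult_INR. simpl. ring. Qed.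

Lemma ex_series_inv_sq : ex_series (fun k => / INR (S k) ^ 2).
Proof.
  apply ex_series_Rle with (fun k => 2 * / INR (S k) - 2 * / INR (S (k + 1))).
  - intros k. rewrite Rabs_pos_eq by (apply Rlt_le, Rinv_0_lt_compat, pow_lt, INR_S_pos).
    rewrite !S_INR, plus_INR. simpl. assert (0 <= INR k) by apply pos_INR.
    apply Rmult_le_reg_l with ((INR k + 1) * (INR k + 1) * (INR k + 1 + 1)); [nra|].
    field_simplify; nra.
  - eexists. apply (is_series_telescope (fun k => 2 * / INR (S k)) 1).
    replace (Finite 0) with (Finite (2 * 0)) by (f_equal; ring).
    apply (is_lim_seq_scal_l _ 2 0), is_lim_seq_inv_S.
Qed.

Lemma ex_series_inv_pow s : (2 <= s)%nat -> ex_series (fun k => / INR (S k) ^ s).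
Proof.
  intros Hs. apply ex_series_Rle with (fun k => / INR (S k) ^ 2); [|apply ex_series_inv_sq].
  intros k. assert (H1 : 1 <= INR (S k)) by (rewrite S_INR; pose proof (pos_INR k); lra).
  rewrite Rabs_pos_eq by (apply Rlt_le, Rinv_0_lt_compat, pow_lt; lra).
  apply Rinv_le_contravar; [apply pow_lt; lra|apply Rle_pow; assumption].
Qed.

Lemma ex_series_inv_odd_pow s : (2 <= s)%nat -> ex_series (fun i => / INR (2 * i + 1) ^ s).
Proof.
  intros Hs. apply ex_series_Rle with (fun k => / INR (S k) ^ s); [|apply ex_series_inv_pow, Hs].
  intros k. rewrite Rabs_pos_eq by (apply Rlt_le, Rinv_0_lt_compat, pow_lt, lt_0_INR; lia).
  apply Rinv_le_contravar; [apply pow_lt, INR_S_pos|].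
  apply pow_incr. split; [apply Rlt_le, INR_S_pos|apply le_INR; lia].
Qed.

Lemma is_series_zeta s : (2 <= s)%nat -> is_series (fun k => / INR (S k) ^ s) (zeta s).
Proof. intros. apply Series_correct, ex_series_inv_pow. assumption. Qed.

Lemma is_series_lambda s :
  (2 <= s)%nat -> is_series (fun i => / INR (2 * i + 1) ^ s) (lambda s).
Proof. intros. apply Series_correct, ex_series_inv_odd_pow. assumption. Qed.

Lemma harmonic_sumN p : harmonic p = sumN (fun k => / INR (S k)) p.
Proof. unfold harmonic. rewrite fold_right_sumN. reflexivity. Qed.

Lemma harmonic_S p : harmonic (S p) = harmonic p + / INR (S p).
Proof. rewrite !harmonic_sumN. reflexivity. Qed.

Lemma harmonic_ge0 p : 0 <= harmonic p.
Proof.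
  rewrite harmonic_sumN. apply sumN_nonneg. intros.
  apply Rlt_le, Rinv_0_lt_compat, INR_S_pos.
Qed.

Lemma harmonic_div_sq_step (H P : R) : 0 <= H -> 1 <= P ->
  H / P ^ 2 <= 3 / 2 * (H / P - (H + / (P + 1) + / (P + 2)) / (P + 2)) + 3 / (P + 1) ^ 2.
Proof.
  intros HH HP.
  assert (A1 : H / P ^ 2 <= 3 * H / (P * (P + 2))).
  { assert (E : 3 * H / (P * (P + 2)) - H / P ^ 2 = H * (2 * P - 2) / (P ^ 2 * (P + 2)))
      by (field; lra).
    assert (0 <= H * (2 * P - 2) / (P ^ 2 * (P + 2))).
    { apply Rmult_le_pos; [nra|]. apply Rlt_le, Rinv_0_lt_compat. nra. }
    lra. }
  assert (A2 : 3 / 2 * (/ (P + 1) + / (P + 2)) / (P + 2) <= 3 / (P + 1) ^ 2).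
  { assert (/ (P + 2) <= / (P + 1)) by (apply Rinv_le_contravar; lra).
    assert (0 < / (P + 2)) by (apply Rinv_0_lt_compat; lra).
    replace (3 / (P + 1) ^ 2) with (3 / 2 * (/ (P + 1) + / (P + 1)) * / (P + 1))
      by (field; lra).
    unfold Rdiv. apply Rmult_le_compat; lra. }
  replace (3 / 2 * (H / P - (H + / (P + 1) + / (P + 2)) / (P + 2)))
    with (3 * H / (P * (P + 2)) - 3 / 2 * (/ (P + 1) + / (P + 2)) / (P + 2)) by (field; lra).
  lra.
Qed.

(* With [v i = H_(2i+1) / (2i+1)], [harmonic_div_sq_step] bounds the [i]-th term by
   [3/2 (v i - v (i+1)) + 3 / (2i+2)^2], so the partial sums stay bounded. *)
Lemma ex_series_harmonic_odd_div_sq :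
  ex_series (fun i => harmonic (2 * i + 1) / INR (2 * i + 1) ^ 2).
Proof.
  set (v := fun i => harmonic (2 * i + 1) / INR (2 * i + 1)).
  set (b := fun i => 3 / INR (S (2 * i + 1)) ^ 2).
  assert (Hb : ex_series b).
  { apply ex_series_Rle with (fun k => 3 * / INR (S k) ^ 2);
      [|apply ex_series_Rscal, ex_series_inv_sq].
    intros k. unfold b.
    rewrite Rabs_pos_eq by (apply Rmult_le_pos; [lra|]; apply Rlt_le, Rinv_0_lt_compat, pow_lt, INR_S_pos).
    apply Rmult_le_compat_l; [lra|]. apply Rinv_le_contravar; [apply pow_lt, INR_S_pos|].
    apply pow_incr. split; [apply Rlt_le, INR_S_pos|apply le_INR; lia]. }
  assert (Hstep : forall i, harmonic (2 * i + 1) / INR (2 * i + 1) ^ 2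
                            <= 3 / 2 * (v i - v (S i)) + b i).
  { intros i. unfold v, b.
    replace (2 * S i + 1)%nat with (S (S (2 * i + 1))) by lia.
    rewrite !harmonic_S, !S_INR.
    replace (INR (2 * i + 1) + 1 + 1) with (INR (2 * i + 1) + 2) by ring.
    apply harmonic_div_sq_step; [apply harmonic_ge0|].
    rewrite INR_odd. pose proof (pos_INR i). lra. }
  assert (Hodd_pos : forall i, 0 < INR (2 * i + 1)) by (intros; apply lt_0_INR; lia).
  assert (Hterm : forall i, 0 <= harmonic (2 * i + 1) / INR (2 * i + 1) ^ 2).
  { intros i. apply Rmult_le_pos; [apply harmonic_ge0|].
    apply Rlt_le, Rinv_0_lt_compat, pow_lt, Hodd_pos. }
  apply (ex_series_bounded _ Hterm (3 / 2 * v O + Series b)).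
  intros N.
  assert (Htel : sumN (fun i => harmonic (2 * i + 1) / INR (2 * i + 1) ^ 2) N
                 <= 3 / 2 * (v O - v N) + sumN b N).
  { induction N as [|N IH]; [simpl; lra|].
    rewrite !sumN_recr. specialize (Hstep N). lra. }
  assert (0 <= v N).
  { apply Rmult_le_pos; [apply harmonic_ge0|]. apply Rlt_le, Rinv_0_lt_compat, Hodd_pos. }
  assert (sumN b N <= Series b).
  { apply sumN_le_Series; [|exact Hb]. intros k. unfold b.
    apply Rmult_le_pos; [lra|]. apply Rlt_le, Rinv_0_lt_compat, pow_lt, INR_S_pos. }
  lra.
Qed.

Lemma is_lim_seq_inv_affine (f : nat -> R) (e d : R) N :
  (forall n, f (n + N)%nat = / (e * INR n + d)) -> 1 <= e -> 1 <= d -> is_lim_seq f 0.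
Proof.
  intros Hf He Hd. apply (is_lim_seq_incr_n _ N), is_lim_seq_le_inv_S.
  intros n. rewrite Hf, S_INR. pose proof (pos_INR n).
  split; [apply Rlt_le, Rinv_0_lt_compat; nra|apply Rinv_le_contravar; nra].
Qed.

Definition inv_shift (q k : nat) : R :=
  if (k =? q)%nat then 0 else / (INR (S k) - INR (S q)).

Lemma inv_shift_add q k : inv_shift q (k + S q) = / INR (S k).
Proof.
  unfold inv_shift. destruct (Nat.eqb_spec (k + S q) q); [lia|].
  f_equal. rewrite !S_INR, plus_INR, S_INR. ring.
Qed.

Lemma is_lim_seq_inv_shift q : is_lim_seq (inv_shift q) 0.
Proof.
  apply (is_lim_seq_inv_affine _ 1 1 (S q)); [|lra|lra].
  intros n. rewrite inv_shift_add, S_INR. f_equal. ring.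
Qed.

Lemma sumN_inv_shift q : sumN (inv_shift q) (S q) = - harmonic q.
Proof.
  rewrite sumN_recr. unfold inv_shift at 2. rewrite Nat.eqb_refl, Rplus_0_r.
  rewrite sumN_rev, harmonic_sumN, <- sumN_opp.
  apply sumN_ext. intros k Hk. unfold inv_shift.
  destruct (Nat.eqb_spec (q - S k) q); [lia|].
  rewrite !S_INR, minus_INR, S_INR by lia. pose proof (pos_INR k). field. lra.
Qed.

Lemma sumN_inv_shift_sym q : sumN (inv_shift q) (2 * q + 1) = 0.
Proof.
  apply sumN_antisym. intros j Hj. unfold inv_shift.
  replace (2 * q + 1 - S j)%nat with (2 * q - j)%nat by lia.
  destruct (Nat.eqb_spec j q) as [->|Hjq].
  - replace (2 * q - q)%nat with q by lia. rewrite Nat.eqb_refl. ring.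
  - destruct (Nat.eqb_spec (2 * q - j) q); [lia|].
    assert (INR j <> INR q) by (intros E; apply INR_eq in E; lia).
    rewrite !S_INR, minus_INR, mult_INR by lia. simpl INR. field. lra.
Qed.

Definition harm_pfrac (p k : nat) : R :=
  if (k =? p - 1)%nat then 0 else / (INR (S k) * (INR p ^ 2 - INR (S k) ^ 2)).

(* Partial fractions in [n = k + 1]: [1 / (n (P^2 - n^2)) = (1/n + 1/(2(P-n)) - 1/(2(P+n))) / P^2]. *)
Lemma harm_pfrac_split q k : let P := INR (S q) in
  harm_pfrac (S q) k
  = / P ^ 2 * (1 / 2 * (/ INR (S k) - / INR (S (k + S q)))
               - 1 / 2 * (inv_shift q k - inv_shift q (k + S q)))
    - (if (k =? q)%nat then 3 / (4 * P ^ 3) else 0).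
Proof.
  intros P. assert (HP : 0 < P) by apply INR_S_pos.
  rewrite inv_shift_add. unfold harm_pfrac, inv_shift. fold P.
  replace (S q - 1)%nat with q by lia.
  replace (INR (S (k + S q))) with (INR (S k) + P) by (unfold P; rewrite !S_INR, plus_INR, S_INR; ring).
  destruct (Nat.eqb_spec k q) as [->|Hk].
  - fold P. field. lra.
  - assert (Hne : INR (S k) <> P) by (intros E; apply INR_eq in E; lia).
    pose proof (INR_S_pos k).
    assert (P ^ 2 - INR (S k) ^ 2 <> 0).
    { replace (P ^ 2 - INR (S k) ^ 2) with ((P - INR (S k)) * (P + INR (S k))) by ring.
      apply Rmult_integral_contrapositive. split; lra. }
    field. repeat split; lra.
Qed.

Lemma is_series_harm_pfrac q :
  is_series (harm_pfrac (S q)) ((harmonic (S q) - 5 / (4 * INR (S q))) / INR (S q) ^ 2).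
Proof.
  apply is_series_ext with (1 := fun k => eq_sym (harm_pfrac_split q k)).
  eapply is_series_eq_lim;
    [|apply is_series_Rminus;
      [apply is_series_Rscal, is_series_Rminus; apply is_series_Rscal
      |apply is_series_spike]].
  3: apply is_series_telescope, is_lim_seq_inv_shift.
  2: apply (is_series_telescope (fun k => / INR (S k))), is_lim_seq_inv_S.
  rewrite sumN_inv_shift, harmonic_S, harmonic_sumN, sumN_recr.
  pose proof (INR_S_pos q). field. lra.
Qed.

Definition odd_pfrac (k i : nat) : R :=
  if (2 * i =? k)%nat then 0 else / (INR (2 * i + 1) ^ 2 - INR (S k) ^ 2).

Lemma odd_pfrac_even_split m i : let K := INR (2 * m + 1) in
  odd_pfrac (2 * m) i
  = / (4 * K) * (inv_shift m i - inv_shift m (i + (2 * m + 1)))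
    + (if (i =? m)%nat then / (4 * K ^ 2) else 0).
Proof.
  intros K. unfold odd_pfrac, inv_shift, K.
  destruct (Nat.eqb_spec (i + (2 * m + 1)) m); [lia|].
  replace (INR (S (2 * m))) with (2 * INR m + 1) by (rewrite S_INR, mult_INR; simpl; ring).
  rewrite !S_INR, !INR_odd, plus_INR, INR_odd. pose proof (pos_INR m). pose proof (pos_INR i).
  destruct (Nat.eqb_spec i m) as [->|Him].
  - rewrite !Nat.eqb_refl. field. lra.
  - replace (2 * i =? 2 * m)%nat with false by (symmetry; apply Nat.eqb_neq; lia).
    assert (INR i - INR m <> 0) by (intros E; apply Him, INR_eq; lra).
    assert ((2 * INR i + 1) ^ 2 - (2 * INR m + 1) ^ 2 <> 0).
    { replace ((2 * INR i + 1) ^ 2 - (2 * INR m + 1) ^ 2)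
        with (4 * (INR i - INR m) * (INR i + INR m + 1)) by ring.
      apply Rmult_integral_contrapositive. split; [apply Rmult_integral_contrapositive|]; lra. }
    field. repeat split; lra.
Qed.

Lemma is_series_odd_pfrac_even m :
  is_series (odd_pfrac (2 * m)) (/ (4 * INR (2 * m + 1) ^ 2)).
Proof.
  apply is_series_ext with (1 := fun i => eq_sym (odd_pfrac_even_split m i)).
  eapply is_series_eq_lim;
    [|apply is_series_Rplus;
      [apply is_series_Rscal, is_series_telescope, is_lim_seq_inv_shift|apply is_series_spike]].
  rewrite sumN_inv_shift_sym. ring.
Qed.

Lemma is_series_odd_pfrac_odd m : is_series (odd_pfrac (2 * m + 1)) 0.
Proof.
  set (b := INR m). assert (Hb : 0 <= b) by apply pos_INR.
  assert (Hne : forall i, 2 * INR i - 2 * b - 1 <> 0).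
  { intros i E. assert (Eq : INR (2 * i) = INR (2 * m + 1))
      by (rewrite INR_odd, mult_INR; unfold b in E; simpl; lra).
    apply INR_eq in Eq. lia. }
  set (W := fun i => / (2 * INR i - 2 * b - 1)).
  assert (Eu : forall i, odd_pfrac (2 * m + 1) i
                         = / (2 * (2 * b + 2)) * (W i - W (i + (2 * m + 2))%nat)).
  { intros i. unfold odd_pfrac, W.
    replace (2 * i =? 2 * m + 1)%nat with false by (symmetry; apply Nat.eqb_neq; lia).
    replace (INR (S (2 * m + 1))) with (2 * b + 2) by (rewrite S_INR, INR_odd; unfold b; ring).
    rewrite (plus_INR i (2 * m + 2)), INR_odd.
    replace (INR (2 * m + 2)) with (2 * b + 2)
      by (rewrite plus_INR, mult_INR; unfold b; simpl; ring).
    specialize (Hne i). set (a := INR i) in *. assert (0 <= a) by apply pos_INR.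
    assert ((2 * a + 1) ^ 2 - (2 * b + 2) ^ 2 <> 0).
    { replace ((2 * a + 1) ^ 2 - (2 * b + 2) ^ 2)
        with ((2 * a - 2 * b - 1) * (2 * a + 2 * b + 3)) by ring.
      apply Rmult_integral_contrapositive. split; lra. }
    field. repeat split; lra. }
  assert (HW : sumN W (2 * m + 2) = 0).
  { apply sumN_antisym. intros j Hj. unfold W.
    replace (2 * m + 2 - S j)%nat with (2 * m + 1 - j)%nat by lia.
    rewrite minus_INR, INR_odd by lia. fold b. specialize (Hne j).
    field. split; lra. }
  assert (HW0 : is_lim_seq W 0).
  { apply (is_lim_seq_inv_affine W 2 1 (S m)); [|lra|lra].
    intros n. unfold W. rewrite plus_INR, S_INR. fold b. f_equal. ring. }
  apply is_series_ext with (1 := fun i => eq_sym (Eu i)).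
  eapply is_series_eq_lim; [|apply is_series_Rscal, (is_series_telescope W _ HW0)].
  rewrite HW. ring.
Qed.

Definition cross_pow_sum (m : nat) (x y : R) : R :=
  sumN (fun t => / x ^ (2 * t + 2) * / y ^ (2 * m + 1 - 2 * t)) m.

Lemma cross_pow_sum_S m x y :
  cross_pow_sum (S m) x y = / x ^ 2 * / y ^ (2 * m + 3) + / x ^ 2 * cross_pow_sum m x y.
Proof.
  unfold cross_pow_sum. rewrite sumN_recl, <- sumN_scal. f_equal.
  - replace (2 * S m + 1 - 2 * 0)%nat with (2 * m + 3)%nat by lia. reflexivity.
  - apply sumN_ext. intros t Ht.
    replace (2 * S t + 2)%nat with (2 * t + 2 + 2)%nat by lia.
    replace (2 * S m + 1 - 2 * S t)%nat with (2 * m + 1 - 2 * t)%nat by lia.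
    rewrite pow_add, Rinv_mult. ring.
Qed.

Lemma cross_pow_sum_neq m x y : 0 < x -> 0 < y -> x <> y ->
  cross_pow_sum m x y = (/ y ^ (2 * m + 1) - / (y * x ^ (2 * m))) / (x ^ 2 - y ^ 2).
Proof.
  intros Hx Hy Hxy.
  assert (Hd : x ^ 2 - y ^ 2 <> 0).
  { replace (x ^ 2 - y ^ 2) with ((x - y) * (x + y)) by ring.
    apply Rmult_integral_contrapositive. split; lra. }
  induction m as [|m IH].
  - unfold cross_pow_sum. simpl. field. lra.
  - rewrite cross_pow_sum_S, IH.
    replace (2 * m + 3)%nat with (2 * m + 1 + 2)%nat by lia.
    replace (2 * S m + 1)%nat with (2 * m + 1 + 2)%nat by lia.
    replace (2 * S m)%nat with (2 * m + 2)%nat by lia. rewrite !pow_add.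
    assert (y ^ (2 * m + 1) <> 0) by (apply pow_nonzero; lra).
    assert (x ^ (2 * m) <> 0) by (apply pow_nonzero; lra).
    field. repeat split; try lra; try assumption; apply pow_nonzero; lra.
Qed.

Lemma cross_pow_sum_diag m x : 0 < x -> cross_pow_sum m x x = INR m / x ^ (2 * m + 3).
Proof.
  intros Hx. induction m as [|m IH].
  - unfold cross_pow_sum. simpl. unfold Rdiv. ring.
  - rewrite cross_pow_sum_S, IH, S_INR.
    replace (2 * S m + 3)%nat with (2 * m + 3 + 2)%nat by lia. rewrite !pow_add.
    assert (x ^ (2 * m) <> 0) by (apply pow_nonzero; lra).
    field. split; lra.
Qed.

Definition X (i : nat) : R := INR (2 * i + 1).
Definition Y (k : nat) : R := INR (S k).

Lemma X_pos i : 0 < X i.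
Proof. apply lt_0_INR. lia. Qed.

Lemma Y_pos k : 0 < Y k.
Proof. apply INR_S_pos. Qed.

Lemma Y_ge1 k : 1 <= Y k.
Proof. unfold Y. rewrite S_INR. pose proof (pos_INR k). lra. Qed.

Lemma Y_double i : Y (2 * i) = X i.
Proof. unfold X, Y. f_equal. lia. Qed.

Lemma INR_S_double i : INR (S (2 * i)) = X i.
Proof. exact (Y_double i). Qed.

Definition cross_term (m i k : nat) : R := cross_pow_sum m (X i) (Y k).
Definition diag_term (m i k : nat) : R :=
  if (k =? 2 * i)%nat then INR m / X i ^ (2 * m + 3) else 0.
Definition odd_term (m i k : nat) : R := / Y k ^ (2 * m + 1) * odd_pfrac k i.
Definition harm_term (m i k : nat) : R := / X i ^ (2 * m) * harm_pfrac (S (2 * i)) k.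

Lemma harm_pfrac_double i k : harm_pfrac (S (2 * i)) k =
  if (k =? 2 * i)%nat then 0 else / (Y k * (X i ^ 2 - Y k ^ 2)).
Proof.
  unfold harm_pfrac. replace (S (2 * i) - 1)%nat with (2 * i)%nat by lia.
  rewrite INR_S_double. reflexivity.
Qed.

Lemma cross_term_decomp m i k : cross_term m i k = diag_term m i k + odd_term m i k - harm_term m i k.
Proof.
  unfold cross_term, diag_term, odd_term, harm_term, odd_pfrac.
  rewrite harm_pfrac_double. fold (X i). fold (Y k).
  pose proof (X_pos i) as Hx. pose proof (Y_pos k) as Hy.
  destruct (Nat.eqb_spec k (2 * i)) as [->|Hk].
  - rewrite Nat.eqb_refl, Y_double, cross_pow_sum_diag by exact Hx. ring.
  - replace (2 * i =? k)%nat with false by (symmetry; apply Nat.eqb_neq; lia).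
    assert (Hne : X i <> Y k) by (unfold X, Y; intros E; apply INR_eq in E; lia).
    rewrite cross_pow_sum_neq by assumption.
    assert (X i ^ 2 - Y k ^ 2 <> 0).
    { replace (X i ^ 2 - Y k ^ 2) with ((X i - Y k) * (X i + Y k)) by ring.
      apply Rmult_integral_contrapositive. split; lra. }
    assert (Y k ^ (2 * m + 1) <> 0) by (apply pow_nonzero; lra).
    assert (X i ^ (2 * m) <> 0) by (apply pow_nonzero; lra).
    field. repeat split; lra.
Qed.

Lemma Rabs_harm_pfrac i k : Rabs (harm_pfrac (S (2 * i)) k)
  = - harm_pfrac (S (2 * i)) k
    + 2 * (if (k <? 2 * i)%nat then harm_pfrac (S (2 * i)) k else 0).
Proof.
  rewrite harm_pfrac_double. pose proof (Y_pos k). pose proof (X_pos i).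
  destruct (Nat.eqb_spec k (2 * i)) as [->|Hk].
  - rewrite Nat.ltb_irrefl, Rabs_R0. ring.
  - destruct (Nat.ltb_spec k (2 * i)) as [Hlt|Hge].
    + assert (Y k < X i) by (rewrite <- INR_S_double; apply lt_INR; lia).
      assert (0 < X i ^ 2 - Y k ^ 2) by nra.
      rewrite Rabs_pos_eq; [ring|].
      apply Rlt_le, Rinv_0_lt_compat, Rmult_lt_0_compat; assumption.
    + assert (X i < Y k) by (rewrite <- INR_S_double; apply lt_INR; lia).
      assert (0 < Y k * - (X i ^ 2 - Y k ^ 2)) by (apply Rmult_lt_0_compat; nra).
      rewrite Rabs_left; [ring|]. apply Rinv_lt_0_compat. lra.
Qed.

Lemma Rabs_odd_term_le m i k : Rabs (odd_term m i k) <= Rabs (harm_pfrac (S (2 * i)) k).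
Proof.
  unfold odd_term, odd_pfrac. rewrite harm_pfrac_double. fold (X i). fold (Y k).
  destruct (Nat.eqb_spec k (2 * i)) as [->|Hk].
  - rewrite Nat.eqb_refl, Rmult_0_r. lra.
  - replace (2 * i =? k)%nat with false by (symmetry; apply Nat.eqb_neq; lia).
    pose proof (Y_ge1 k).
    assert (1 <= Y k ^ (2 * m)) by (apply pow_R1_Rle; lra).
    rewrite Rinv_mult, !Rabs_mult. apply Rmult_le_compat_r; [apply Rabs_pos|].
    rewrite !Rabs_pos_eq by (apply Rlt_le, Rinv_0_lt_compat; try apply pow_lt; lra).
    apply Rinv_le_contravar; [lra|].
    rewrite Nat.add_1_r. change (Y k ^ S (2 * m)) with (Y k * Y k ^ (2 * m)). nra.
Qed.

Lemma inv_mul_diff_sq_le (y P : R) : 0 < y -> y < P ->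
  / (y * (P ^ 2 - y ^ 2)) <= / P ^ 2 * (/ y + / (P - y)).
Proof.
  intros Hy HyP.
  replace (/ P ^ 2 * (/ y + / (P - y))) with (/ (P * y * (P - y))) by (field; repeat split; lra).
  apply Rinv_le_contravar; [apply Rmult_lt_0_compat; [apply Rmult_lt_0_compat|]; lra|].
  assert (0 < y * (P - y)) by (apply Rmult_lt_0_compat; lra). nra.
Qed.

Lemma sumN_harm_pfrac_le i :
  sumN (harm_pfrac (S (2 * i))) (2 * i) <= 2 * harmonic (S (2 * i)) / X i ^ 2.
Proof.
  set (c := fun k => / INR (S k)).
  apply Rle_trans with (sumN (fun k => / X i ^ 2 * (c k + c (2 * i - S k)%nat)) (2 * i)).
  - apply sumN_le. intros k Hk. rewrite harm_pfrac_double.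
    replace (k =? 2 * i)%nat with false by (symmetry; apply Nat.eqb_neq; lia).
    unfold c. replace (INR (S (2 * i - S k))) with (X i - Y k).
    + apply inv_mul_diff_sq_le; [apply Y_pos|]. rewrite <- INR_S_double. apply lt_INR. lia.
    + rewrite <- INR_S_double. unfold Y. rewrite !S_INR, minus_INR, S_INR by lia. ring.
  - rewrite sumN_scal, sumN_plus, <- sumN_rev, harmonic_S, harmonic_sumN.
    assert (0 < c (2 * i)%nat) by apply Rinv_0_lt_compat, INR_S_pos.
    assert (0 < / X i ^ 2) by apply Rinv_0_lt_compat, pow_lt, X_pos.
    unfold c in *. unfold Rdiv. nra.
Qed.

Definition odd_row_bound (i : nat) : R :=
  5 / 4 * / X i ^ 3 + 4 * (harmonic (S (2 * i)) / X i ^ 2).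

Lemma ex_series_odd_row_bound : ex_series odd_row_bound.
Proof.
  apply ex_series_Rplus; apply ex_series_Rscal.
  - apply ex_series_inv_odd_pow. lia.
  - apply ex_series_ext with (2 := ex_series_harmonic_odd_div_sq).
    intros i. unfold X. rewrite Nat.add_1_r. reflexivity.
Qed.

Lemma odd_term_row m i :
  ex_series (fun k => Rabs (odd_term m i k)) /\
  Series (fun k => Rabs (odd_term m i k)) <= odd_row_bound i.
Proof.
  assert (Habs : is_series (fun k => Rabs (harm_pfrac (S (2 * i)) k))
    (- ((harmonic (S (2 * i)) - 5 / (4 * X i)) / X i ^ 2)
     + 2 * sumN (harm_pfrac (S (2 * i))) (2 * i))).
  { apply is_series_ext with (1 := fun k => eq_sym (Rabs_harm_pfrac i k)).
    apply is_series_Rplus; [|apply is_series_Rscal, is_series_finite_support].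
    rewrite <- INR_S_double. apply is_series_Ropp, is_series_harm_pfrac. }
  assert (Hex : ex_series (fun k => Rabs (odd_term m i k))).
  { apply ex_series_Rle with (fun k => Rabs (harm_pfrac (S (2 * i)) k)); [|eexists; exact Habs].
    intros k. rewrite Rabs_Rabsolu. apply Rabs_odd_term_le. }
  split; [exact Hex|].
  apply Rle_trans with (Series (fun k => Rabs (harm_pfrac (S (2 * i)) k))).
  { apply Series_le; [|eexists; exact Habs]. intros k. split; [apply Rabs_pos|apply Rabs_odd_term_le]. }
  rewrite (is_series_unique _ _ Habs). unfold odd_row_bound.
  pose proof (sumN_harm_pfrac_le i). pose proof (harmonic_ge0 (S (2 * i))). pose proof (X_pos i).
  assert (0 <= harmonic (S (2 * i)) / X i ^ 2) by (apply Rmult_le_pos; [lra|];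
    apply Rlt_le, Rinv_0_lt_compat, pow_lt; lra).
  replace (- ((harmonic (S (2 * i)) - 5 / (4 * X i)) / X i ^ 2))
    with (5 / 4 * / X i ^ 3 - harmonic (S (2 * i)) / X i ^ 2) by (field; lra).
  unfold Rdiv in *. lra.
Qed.

(* By Fubini, via the column sums: [0] for odd [k], [/ (4 (k+1)^(2m+3))] for even [k]. *)
Lemma is_series_odd_term_total m :
  is_series (fun i => Series (odd_term m i)) (lambda (2 * m + 3) / 4).
Proof.
  pose proof (odd_term_row m) as Hrow.
  assert (Htot : ex_series (fun i => Series (fun k => Rabs (odd_term m i k)))).
  { apply ex_series_Rle with odd_row_bound; [|apply ex_series_odd_row_bound].
    intros i. rewrite Rabs_pos_eq; [apply Hrow|].
    apply Series_ge0; [intros; apply Rabs_pos|apply Hrow]. }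
  assert (Hcol : is_series (fun k => Series (fun i => odd_term m i k)) (lambda (2 * m + 3) / 4)).
  { apply is_series_even.
    - intros j. apply is_series_unique. unfold odd_term.
      eapply is_series_eq_lim; [|apply is_series_Rscal, is_series_odd_pfrac_odd]. ring.
    - apply is_series_ext with (fun j => / 4 * / X j ^ (2 * m + 3)).
      + intros j. symmetry. apply is_series_unique. unfold odd_term.
        eapply is_series_eq_lim; [|apply is_series_Rscal, is_series_odd_pfrac_even].
        rewrite Y_double. fold (X j). pose proof (X_pos j).
        replace (2 * m + 3)%nat with (2 * m + 1 + 2)%nat by lia. rewrite !pow_add.
        field. split; [lra|apply pow_nonzero; lra].
      + eapply is_series_eq_lim; [|apply is_series_Rscal, is_series_lambda; lia].
        unfold Rdiv. ring. }
  pose proof (fubini (odd_term m) (fun i => proj1 (Hrow i)) Htot) as Hfub.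
  assert (E : Series (fun i => Series (odd_term m i)) = lambda (2 * m + 3) / 4).
  { rewrite <- (is_series_unique _ _ Hfub). exact (is_series_unique _ _ Hcol). }
  rewrite <- E. apply Series_correct.
  apply ex_series_Rle with odd_row_bound; [|apply ex_series_odd_row_bound].
  intros i. eapply Rle_trans; [apply Series_Rabs, Hrow|apply Hrow].
Qed.

Lemma is_series_cross_row m i : is_series (cross_term m i)
  (sumN (fun t => / X i ^ (2 * t + 2) * zeta (2 * m + 1 - 2 * t)) m).
Proof.
  apply (is_series_sum_family (fun t k => / X i ^ (2 * t + 2) * / Y k ^ (2 * m + 1 - 2 * t))).
  intros t Ht. apply is_series_Rscal, is_series_zeta. lia.
Qed.

Lemma is_series_cross_total m : is_series (fun i => Series (cross_term m i))
  (sumN (fun t => zeta (2 * m + 1 - 2 * t) * lambda (2 * t + 2)) m).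
Proof.
  apply is_series_ext with
    (fun i => sumN (fun t => / X i ^ (2 * t + 2) * zeta (2 * m + 1 - 2 * t)) m).
  { intros i. symmetry. apply is_series_unique, is_series_cross_row. }
  apply (is_series_sum_family (fun t i => / X i ^ (2 * t + 2) * zeta (2 * m + 1 - 2 * t))).
  intros t Ht. apply is_series_ext with (fun i => zeta (2 * m + 1 - 2 * t) * / X i ^ (2 * t + 2)).
  - intros i. apply Rmult_comm.
  - apply is_series_Rscal, is_series_lambda. lia.
Qed.

Lemma is_series_diag_row m i : is_series (diag_term m i) (INR m / X i ^ (2 * m + 3)).
Proof. apply is_series_spike. Qed.

Lemma is_series_harm_row m i : is_series (harm_term m i)
  (/ X i ^ (2 * m) * ((harmonic (S (2 * i)) - 5 / (4 * X i)) / X i ^ 2)).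
Proof. unfold harm_term. rewrite <- INR_S_double. apply is_series_Rscal, is_series_harm_pfrac. Qed.

Lemma harmonic_term_decomp m i :
  harmonic (2 * i + 1) / INR (2 * i + 1) ^ (2 * S m)
  = Series (odd_term m i) - Series (cross_term m i) + Series (diag_term m i)
    + 5 / 4 * / X i ^ (2 * m + 3).
Proof.
  assert (Hdiag : ex_series (diag_term m i)) by (eexists; apply is_series_diag_row).
  assert (Hodd : ex_series (odd_term m i)) by apply ex_series_Rabs, (odd_term_row m i).
  assert (Hharm : ex_series (harm_term m i)) by (eexists; apply is_series_harm_row).
  assert (E : Series (odd_term m i) - Series (cross_term m i) + Series (diag_term m i)
              = Series (harm_term m i)).
  { rewrite (Series_ext _ _ (cross_term_decomp m i)), Series_minus, Series_plus
      by (try apply ex_series_Rplus; assumption).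
    ring. }
  rewrite E, (is_series_unique _ _ (is_series_harm_row m i)).
  replace (2 * i + 1)%nat with (S (2 * i)) by lia. rewrite INR_S_double.
  replace (2 * S m)%nat with (2 * m + 2)%nat by lia.
  replace (2 * m + 3)%nat with (2 * m + 2 + 1)%nat by lia.
  pose proof (X_pos i). rewrite !pow_add.
  assert (X i ^ (2 * m) <> 0) by (apply pow_nonzero; lra).
  field. repeat split; lra.
Qed.

Theorem mainTheorem15 (a : nat) (ha : (1 <= a)%nat) :
  is_series (fun n : nat => harmonic (2 * n + 1) / (INR (2 * n + 1)) ^ (2 * a))
    ((INR (2 * a + 1)) / 2 * lambda (2 * a + 1)
     - sum_1_to (a - 1) (fun j => zeta (2 * a + 1 - 2 * j) * lambda (2 * j))).
Proof.
  destruct a as [|m]; [lia|].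
  apply is_series_ext with (1 := fun i => eq_sym (harmonic_term_decomp m i)).
  assert (Hdiag : is_series (fun i => Series (diag_term m i)) (INR m * lambda (2 * m + 3))).
  { apply is_series_ext with (fun i => INR m * / X i ^ (2 * m + 3)).
    - intros i. symmetry. apply is_series_unique, is_series_diag_row.
    - apply is_series_Rscal, is_series_lambda. lia. }
  eapply is_series_eq_lim;
    [|apply is_series_Rplus;
      [apply is_series_Rplus;
        [apply is_series_Rminus; [apply is_series_odd_term_total|apply is_series_cross_total]
        |exact Hdiag]
      |apply is_series_Rscal, is_series_lambda; lia]].
  unfold sum_1_to. rewrite fold_right_sumN, Nat.sub_1_r. simpl Nat.pred.
  rewrite (sumN_ext (fun k => zeta (2 * S m + 1 - 2 * (1 + k)) * lambda (2 * (1 + k)))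
                    (fun t => zeta (2 * m + 1 - 2 * t) * lambda (2 * t + 2)))
    by (intros; f_equal; f_equal; lia).
  replace (2 * S m + 1)%nat with (2 * m + 3)%nat by lia.
  rewrite plus_INR, mult_INR. simpl INR. field.
Qed.
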